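(* Let $\mathbb{K}$ be a field of characteristic $0$, let $F(n)$ be a holonomic sequence over $\mathbb{K}$, and let $L=\sum_{i=0}^{J}a_i(n)\sigma^i\in\operatorname{ann}F(n)$ be a nonzero operator. Then there exists a nonzero polynomial $p(n)\in\mathbb{K}[n]$ such that $p(n)F(n)$ is summable and \[\deg p(n)\le \deg L + C_L,\] where $\deg L$ is the degree of $L$ and $C_L$ is the continued zero index of $L$.
   Context: $\sigma$ is the shift operator, $\sigma(F(n))=F(n+1)$, and for $L=\sum_{i=0}^J a_i(n)\sigma^i\in\mathbb{K}[n][\sigma]$, $L(F(n))=\sum_{i=0}^J a_i(n)F(n+i)$. The annihilator is $\operatorname{ann}F(n)=\{L\in\mathbb{K}[n][\sigma]: L(F(n))=0\}$; $F$ is holonomic if $\operatorname{ann}F(n)\ne\{0\}$. The order $\operatorname{ord}F(n)$ is the minimal order $J$ of a nonzero element of $\operatorname{ann}F(n)$. A holonomic sequence $G(n)$ of order $J$ is summable if $G(n)=\Delta\big(\sum_{i=0}^{J-1}u_i(n)G(n+i)\big)$ for some rational functions $u_i(n)\in\mathbb{K}(n)$, where $\Delta=\sigma-1$. The adjoint of $L$ acts on polynomials by $L^*(x(n))=\sum_{i=0}^J a_i(n-i)x(n-i)$. Degree of $L$: put $b_k(n)=\sum_{j=k}^{J}\binom{j}{k}a_{J-j}(n+j-J)$ for $0\le k\le J$, and $\deg L=\max_{0\le k\le J}\{\deg b_k(n)-k\}$. Continued zero index $C_L$: if $L^*(1)\neq0$ then $C_L=0$; if $L^*(1)=0$ then $C_L$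 is the positive integer with $L^*(n^{C_L})\neq 0$ and $L^*(n^i)=0$ for $0\le i\le C_L-1$. *)

From mathcomp Require Import all_boot all_order all_algebra.
Set Implicit Arguments. Unset Strict Implicit. Unset Printing Implicit Defensive.
Import Order.TTheory GRing.Theory Num.Theory.
Local Open Scope ring_scope.

Section Holonomic.
Variable K : fieldType.

(* A sequence over K is a function nat -> K; its n-th term is F n, and
   the variable n is interpreted in K as n%:R.
   An operator L = \sum_{i=0}^J a_i(n) sigma^i in K[n][sigma] is represented
   by its coefficient list [:: a_0; ...; a_J] : seq {poly K}. *)
Definition op := seq {poly K}.

Definition apply_op (L : op) (G : nat -> K) (n : nat) : K :=
  \sum_(i < size L) (L`_i).[n%:R] * G (n + i)%N.

Definition in_ann (L : op) (G : nat -> K) : Prop := forall n, apply_op L G n = 0.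

Definition nonzero_op (L : op) : bool := has (fun a => a != 0) L.

Definition holonomic (G : nat -> K) : Prop :=
  exists L : op, nonzero_op L /\ in_ann L G.

(* ord G = J : minimal order of a nonzero element of ann G.  A nonzero
   operator written with nonzero leading coefficient (last 0 L != 0)
   has order (size L).-1. *)
Definition ord_seq (G : nat -> K) (J : nat) : Prop :=
  (exists L : op, last 0 L != 0 /\ size L = J.+1 /\ in_ann L G) /\
  (forall L : op, last 0 L != 0 -> in_ann L G -> (J <= (size L).-1)%N).

(* G of order J is summable if G(n) = Delta(\sum_{i<J} u_i(n) G(n+i)) with
   u_i = num_i / den_i rational functions; the identity is an identity of
   sequences, i.e. it holds for all sufficiently large n (this also avoids
   the finitely many poles of the u_i). *)
Definition summable (G : nat -> K) : Prop :=
  exists J : nat, ord_seq G J /\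
  exists (num den : 'I_J -> {poly K}), (forall i, den i != 0) /\
  let T := fun m : nat =>
     \sum_(i < J) (num i).[m%:R] / (den i).[m%:R] * G (m + i)%N in
  exists N : nat, forall n : nat, (N <= n)%N -> G n = T n.+1 - T n.

Definition adjoint (L : op) (x : {poly K}) : {poly K} :=
  \sum_(i < size L) ((L`_i * x) \Po ('X - (i%:R)%:P)).

Definition czi (L : op) (C : nat) : Prop :=
  adjoint L 'X^C != 0 /\ forall i : nat, (i < C)%N -> adjoint L 'X^i = 0.

Definition bcoef (L : op) (k : nat) : {poly K} :=
  let J := (size L).-1 in
  \sum_(k <= j < J.+1) ('C(j, k))%:R *: (L`_(J - j) \Po ('X + (j%:R - J%:R)%:P)).

(* deg L = max_{0<=k<=J} (deg b_k - k), with deg 0 = -oo: the maximum is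
   taken over the k with b_k != 0 (at least one exists for a nonzero L).
   The seed -(J+1) is strictly below every such term (deg b_k - k >= -J),
   so it plays the role of -oo and never affects the value. *)
Definition degL (L : op) : int :=
  let J := (size L).-1 in
  \big[Num.max / - (J.+1)%:Z]_(k < J.+1 | bcoef L k != 0)
     ((size (bcoef L k))%:Z - 1 - k%:Z).

End Holonomic.

(* Take p := L^*(n^C), nonzero by the definition of C.  Lagrange's identity
   x(n) (L F)(n) - (L^* x)(n) F(n) = S(n+1) - S(n), where S(n) is a K[n]-linear
   combination of F(n), ..., F(n+J-1), makes p F a telescoping difference once
   L F = 0.  Dividing by p and eliminating the higher shifts with a minimal
   annihilator of p F turns S into a combination of the first ord(p F) shifts of
   p F with rational coefficients, i.e. p F is summable.  For the degree,
   L^*(x)(n) = sum_k b_k(n) (Delta^k x)(n - J), and Delta^k n^C has degree at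
   most C - k. *)

From mathcomp Require Import all_boot all_order all_algebra.
From mathcomp Require Import zify ring.
From Stdlib Require Classical_Prop IndefiniteDescription Wf_nat.
Set Implicit Arguments. Unset Strict Implicit. Unset Printing Implicit Defensive.
Import Order.TTheory GRing.Theory Num.Theory.
Local Open Scope ring_scope.

Definition eventually (P : nat -> Prop) := exists N, forall n, (N <= n)%N -> P n.

Lemma eventually_mono (P Q : nat -> Prop) :
  eventually P -> (forall n, P n -> Q n) -> eventually Q.
Proof. by case=> N HN PQ; exists N => n /HN /PQ. Qed.

Lemma eventually_and (P Q : nat -> Prop) :
  eventually P -> eventually Q -> eventually (fun n => P n /\ Q n).
Proof.
case=> N1 H1 [N2 H2]; exists (maxn N1 N2) => n; rewrite geq_max => /andP[n1 n2].
by split; [apply: H1 | apply: H2].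
Qed.

Lemma eventually_shift (P : nat -> Prop) k :
  eventually P -> eventually (fun n => P (n + k)%N).
Proof. by case=> N HN; exists N => n Nn; apply: HN; rewrite (leq_trans Nn) ?leq_addr. Qed.

Lemma eventually_forall_lt m (P : nat -> nat -> Prop) :
  (forall i, (i < m)%N -> eventually (P i)) ->
  eventually (fun n => forall i, (i < m)%N -> P i n).
Proof.
elim: m => [|m IH] HP; first by exists 0%N.
have [N1 H1] := IH (fun i lt_im => HP i (ltnW lt_im)).
have [N2 H2] := HP m (ltnSn m).
exists (maxn N1 N2) => n; rewrite geq_max => /andP[n1 n2] i.
by rewrite ltnS leq_eqVlt => /orP[/eqP-> | lt_im]; [apply: H2 | apply: H1].
Qed.

Lemma last_neq0_size_gt0 (R : nmodType) (s : seq R) : last 0 s != 0 -> (0 < size s)%N.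
Proof. by case: s => //=; rewrite eqxx. Qed.

Section RationalSequences.
Variable K : fieldType.
Hypothesis charK0 : [pchar K] =i pred0.

Lemma poly_eventually_neq0 (q : {poly K}) :
  q != 0 -> eventually (fun n => q.[n%:R] != 0).
Proof.
have [m] := ubnP (size q); elim: m q => // m IH q size_q q_neq0.
have [[r qr] | no_root] := Classical_Prop.classic (exists r : nat, root q r%:R); last first.
  by exists 0%N => n _; apply/negP => qn; apply: no_root; exists n.
have [q' def_q] := factor_theorem _ _ qr.
have q'_neq0 : q' != 0 by apply: contraNneq q_neq0 => q'0; rewrite def_q q'0 mul0r.
have size_q' : (size q' < m)%N.
  by move: size_q; rewrite def_q size_mul ?polyXsubC_eq0 // size_XsubC addn2.
have [N HN] := IH q' size_q' q'_neq0.
exists (maxn N r.+1) => n; rewrite geq_max => /andP[Nn rn].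
rewrite def_q hornerM hornerXsubC mulf_neq0 ?HN // -natrB ?(ltnW rn) //.
by move/pcharf0P: charK0 => ->; rewrite subn_eq0 -ltnNge.
Qed.

Definition eventually_rational (c : nat -> K) :=
  exists num den : {poly K}, den != 0 /\
    eventually (fun n => c n = num.[n%:R] / den.[n%:R]).

Lemma eventually_rational_ext c c' :
  eventually (fun n => c n = c' n) -> eventually_rational c' -> eventually_rational c.
Proof.
move=> cc' [a [b [b_neq0 c'E]]]; exists a, b; split => //.
by apply: (eventually_mono (eventually_and cc' c'E)) => n [-> ->].
Qed.

Lemma eventually_rational_poly (q : {poly K}) : eventually_rational (fun n => q.[n%:R]).
Proof. by exists q, 1; split; [exact: oner_neq0 | exists 0%N => n _; rewrite hornerC divr1]. Qed.

Lemma eventually_rational_cst (a : K) : eventually_rational (fun _ => a).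
Proof.
apply: eventually_rational_ext (eventually_rational_poly a%:P).
by exists 0%N => n _; rewrite hornerC.
Qed.

Lemma eventually_rational_inv (q : {poly K}) :
  q != 0 -> eventually_rational (fun n => q.[n%:R]^-1).
Proof. by move=> q_neq0; exists 1, q; split => //; exists 0%N => n _; rewrite hornerC div1r. Qed.

Lemma eventually_rational_add c d :
  eventually_rational c -> eventually_rational d ->
  eventually_rational (fun n => c n + d n).
Proof.
move=> [a [b [b_neq0 cE]]] [a' [b' [b'_neq0 dE]]].
exists (a * b' + a' * b), (b * b'); split; first by rewrite mulf_neq0.
have b_ev := eventually_and (poly_eventually_neq0 b_neq0) (poly_eventually_neq0 b'_neq0).
apply: (eventually_mono (eventually_and (eventually_and cE dE) b_ev)) => n [[-> ->] [bn b'n]].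
by rewrite !hornerE; field; rewrite bn b'n.
Qed.

Lemma eventually_rational_mul c d :
  eventually_rational c -> eventually_rational d ->
  eventually_rational (fun n => c n * d n).
Proof.
move=> [a [b [b_neq0 cE]]] [a' [b' [b'_neq0 dE]]].
exists (a * a'), (b * b'); split; first by rewrite mulf_neq0.
have b_ev := eventually_and (poly_eventually_neq0 b_neq0) (poly_eventually_neq0 b'_neq0).
apply: (eventually_mono (eventually_and (eventually_and cE dE) b_ev)) => n [[-> ->] [bn b'n]].
by rewrite !hornerM; field; rewrite bn b'n.
Qed.

Lemma eventually_rational_shift c k :
  eventually_rational c -> eventually_rational (fun n => c (n + k)%N).
Proof.
move=> [a [b [b_neq0 cE]]].
exists (a \Po ('X + k%:R%:P)), (b \Po ('X + k%:R%:P)); split.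
  by rewrite comp_poly2_eq0 ?size_XaddC.
apply: (eventually_mono (eventually_shift k cE)) => n ->.
by rewrite !horner_comp !hornerE natrD.
Qed.

End RationalSequences.

Section RationalCombinations.
Variable K : fieldType.
Hypothesis charK0 : [pchar K] =i pred0.

Definition rat_comb (G : nat -> K) (m : nat) (T : nat -> K) :=
  exists f : nat -> nat -> K, (forall i, eventually_rational (f i)) /\
    eventually (fun n => T n = \sum_(i < m) f i n * G (n + i)%N).

Lemma rat_comb_ext G m T T' :
  eventually (fun n => T n = T' n) -> rat_comb G m T' -> rat_comb G m T.
Proof.
move=> TT' [f [f_rat T'E]]; exists f; split => //.
by apply: (eventually_mono (eventually_and TT' T'E)) => n [-> ->].
Qed.

Lemma rat_comb0 G m : rat_comb G m (fun _ => 0).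
Proof.
exists (fun _ _ => 0); split; first by move=> i; apply: eventually_rational_cst.
by exists 0%N => n _; rewrite big1 // => i _; rewrite mul0r.
Qed.

Lemma rat_comb_add G m T T' :
  rat_comb G m T -> rat_comb G m T' -> rat_comb G m (fun n => T n + T' n).
Proof.
move=> [f [f_rat TE]] [f' [f'_rat T'E]].
exists (fun i n => f i n + f' i n); split; first by move=> i; apply: eventually_rational_add.
apply: (eventually_mono (eventually_and TE T'E)) => n [-> ->].
by rewrite -big_split; apply: eq_bigr => i _; rewrite mulrDl.
Qed.

Lemma rat_comb_scale G m T e :
  eventually_rational e -> rat_comb G m T -> rat_comb G m (fun n => e n * T n).
Proof.
move=> e_rat [f [f_rat TE]].
exists (fun i n => e n * f i n); split; first by move=> i; apply: eventually_rational_mul.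
apply: (eventually_mono TE) => n ->.
by rewrite mulr_sumr; apply: eq_bigr => i _; rewrite mulrA.
Qed.

Lemma rat_comb_sum G m k (T : nat -> nat -> K) :
  (forall i, (i < k)%N -> rat_comb G m (T i)) ->
  rat_comb G m (fun n => \sum_(i < k) T i n).
Proof.
elim: k => [|k IH] HT.
  by apply: rat_comb_ext (rat_comb0 G m); exists 0%N => n _; rewrite big_ord0.
apply: rat_comb_ext (rat_comb_add (IH (fun i lt_ik => HT i (ltnW lt_ik))) (HT k (ltnSn k))).
by exists 0%N => n _; rewrite big_ord_recr.
Qed.

Lemma rat_comb_opp G m T : rat_comb G m T -> rat_comb G m (fun n => - T n).
Proof.
move=> TG; apply: rat_comb_ext (rat_comb_scale (eventually_rational_cst (-1)) TG).
by exists 0%N => n _; rewrite mulN1r.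
Qed.

Lemma rat_comb_shift G m k : (k < m)%N -> rat_comb G m (fun n => G (n + k)%N).
Proof.
move=> lt_km; exists (fun i _ => (i == k)%:R); split.
  by move=> i; apply: eventually_rational_cst.
exists 0%N => n _; rewrite (bigD1 (Ordinal lt_km)) //= eqxx mul1r big1 ?addr0 //.
by move=> i; rewrite -val_eqE /= => /negPf->; rewrite mul0r.
Qed.

Lemma ann_solve_lead (M : op K) r G n :
  size M = r.+1 -> in_ann M G -> (M`_r).[n%:R] != 0 ->
  G (n + r)%N = \sum_(i < r) (- M`_i).[n%:R] / (M`_r).[n%:R] * G (n + i)%N.
Proof.
move=> size_M annMG Mr_neq0; apply: (mulfI Mr_neq0).
have : apply_op M G n = 0 by [].
rewrite /apply_op size_M big_ord_recr /= addrC => /eqP; rewrite addr_eq0 => /eqP->.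
rewrite mulr_sumr -sumrN; apply: eq_bigr => i _.
by rewrite hornerN; field.
Qed.

Lemma rat_comb_shift_ann G (M : op K) r k :
  last 0 M != 0 -> size M = r.+1 -> in_ann M G -> rat_comb G r (fun n => G (n + k)%N).
Proof.
move=> M_lead size_M annMG; have Mr_neq0 : M`_r != 0 by move: M_lead; rewrite -nth_last size_M.
elim/ltn_ind: k => k IH; have [lt_kr | le_rk] := ltnP k r; first exact: rat_comb_shift.
have [s def_k] : exists s, k = (s + r)%N by exists (k - r)%N; rewrite subnK.
rewrite def_k; pose c i n := (- M`_i).[n%:R] / (M`_r).[n%:R].
apply: (rat_comb_ext (T' := fun n => \sum_(i < r) c i (n + s)%N * G (n + (s + i))%N)).
  have Mr_ev := eventually_shift s (poly_eventually_neq0 charK0 Mr_neq0).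
  apply: (eventually_mono Mr_ev) => n /(ann_solve_lead size_M annMG); rewrite addnA => ->.
  by apply: eq_bigr => i _; rewrite addnA.
apply: (rat_comb_sum (T := fun i n => c i (n + s)%N * G (n + (s + i))%N)) => i lt_ir.
apply: rat_comb_scale; last by apply: IH; rewrite def_k ltn_add2l.
apply: (eventually_rational_shift (c := c i)).
by apply: (eventually_rational_mul charK0);
  [exact: eventually_rational_poly | exact: eventually_rational_inv].
Qed.

Lemma rat_comb_reduce G (M : op K) r m T :
  last 0 M != 0 -> size M = r.+1 -> in_ann M G -> rat_comb G m T -> rat_comb G r T.
Proof.
move=> M_lead size_M annMG [f [f_rat TE]]; apply: rat_comb_ext TE _.
apply: (rat_comb_sum (T := fun i n => f i n * G (n + i)%N)) => i _.
apply: rat_comb_scale => //.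
exact: rat_comb_shift_ann M_lead size_M annMG.
Qed.

Lemma rat_comb_mul_poly (p : {poly K}) F m T :
  p != 0 -> rat_comb F m T -> rat_comb (fun n => p.[n%:R] * F n) m T.
Proof.
move=> p_neq0 [f [f_rat TE]].
exists (fun i n => f i n * p.[(n + i)%N%:R]^-1); split.
  move=> i; apply: eventually_rational_mul => //.
  exact: (eventually_rational_shift (c := fun n => p.[n%:R]^-1)) (eventually_rational_inv p_neq0).
have [N pN] := poly_eventually_neq0 charK0 p_neq0.
have p_ev : eventually (fun n => forall i, p.[(n + i)%N%:R] != 0).
  by exists N => n Nn i; apply: pN; rewrite (leq_trans Nn) ?leq_addr.
apply: (eventually_mono (eventually_and TE p_ev)) => n [-> pn].
by apply: eq_bigr => i _; rewrite mulrA divfK.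
Qed.

End RationalCombinations.

Section Annihilators.
Variable K : fieldType.

Lemma in_ann_mul_poly (L : op K) F (p : {poly K}) :
  p != 0 -> last 0 L != 0 -> in_ann L F ->
  exists L' : op K, last 0 L' != 0 /\ in_ann L' (fun n => p.[n%:R] * F n).
Proof.
(* The i-th coefficient of L' is a_i(n) \prod_(j <> i) p(n+j), so that
   L'(p F)(n) = (\prod_j p(n+j)) L(F)(n). *)
move=> p_neq0 L_lead annLF; set S := size L.
have S_gt0 : (0 < S)%N by apply: last_neq0_size_gt0.
pose Q i := \prod_(j < S | j != i :> nat) (p \Po ('X + j%:R%:P)).
have Q_neq0 i : Q i != 0.
  by apply/prodf_neq0 => j _; rewrite comp_poly2_eq0 ?size_XaddC.
exists (mkseq (fun i => L`_i * Q i) S); split.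
  by rewrite -nth_last size_mkseq nth_mkseq ?prednK // mulf_neq0 // nth_last.
move=> n; rewrite /apply_op size_mkseq.
transitivity ((\prod_(j < S) p.[(n + j)%N%:R]) * apply_op L F n); last first.
  by rewrite annLF mulr0.
rewrite /apply_op mulr_sumr; apply: eq_bigr => i _.
rewrite nth_mkseq // hornerM (bigD1 i) //= horner_prod.
under eq_bigr => j _ do rewrite horner_comp hornerD hornerX hornerC -natrD.
by ring.
Qed.

Lemma ord_seq_exists G :
  (exists L : op K, last 0 L != 0 /\ in_ann L G) -> exists J, ord_seq G J.
Proof.
move=> [L [L_lead annLG]].
pose P J := exists L : op K, last 0 L != 0 /\ size L = J.+1 /\ in_ann L G.
have P_inh : exists J, P J by exists (size L).-1, L; rewrite prednK ?last_neq0_size_gt0.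
have [J [[PJ J_min] _]] := Wf_nat.dec_inh_nat_subset_has_unique_least_element P
  (fun J => Classical_Prop.classic (P J)) P_inh.
exists J; split => // L' L'_lead annL'G; apply/ssrnat.leP/J_min; exists L'.
by rewrite prednK ?last_neq0_size_gt0.
Qed.

End Annihilators.

Section Lagrange.
Variable K : fieldType.

Definition lagrange_sum (L : op K) (x : {poly K}) (F : nat -> K) (n : nat) : K :=
  \sum_(i < size L) \sum_(k < i) (L`_i * x).[n%:R - i%:R + k%:R] * F (n + k)%N.

Lemma lagrange_identity (L : op K) x F n :
  x.[n%:R] * apply_op L F n - (adjoint L x).[n%:R] * F n =
  lagrange_sum L x F n.+1 - lagrange_sum L x F n.
Proof.
pose u (h : {poly K}) (i k : nat) := h.[n%:R - i%:R + k%:R] * F (n + k)%N.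
have window h i :
    \sum_(k < i) h.[n.+1%:R - i%:R + k%:R] * F (n.+1 + k)%N -
    \sum_(k < i) h.[n%:R - i%:R + k%:R] * F (n + k)%N =
    h.[n%:R] * F (n + i)%N - h.[n%:R - i%:R] * F n.
  rewrite -sumrB (eq_bigr (fun k : 'I_i => u h i k.+1 - u h i k)); last first.
    by move=> k _; rewrite /u addSnnS mulrSr; congr (_.[_] * _ - _); ring.
  rewrite -(big_mkord (fun _ => true) (fun k => u h i k.+1 - u h i k)) telescope_sumr //.
  by rewrite /u subrK addr0 addn0.
rewrite /lagrange_sum -sumrB; under eq_bigr => i _ do rewrite window.
rewrite sumrB /apply_op /adjoint horner_sum mulr_suml mulr_sumr; congr (_ - _).
  by apply: eq_bigr => i _; rewrite hornerM mulrCA mulrA.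
by apply: eq_bigr => i _; rewrite horner_comp hornerXsubC.
Qed.

Lemma adjoint_ann_telescoping (L : op K) x F n : in_ann L F ->
  (adjoint L x).[n%:R] * F n = - lagrange_sum L x F n.+1 - - lagrange_sum L x F n.
Proof. by move=> annLF; rewrite -opprD -(lagrange_identity L x F n) annLF mulr0 sub0r opprK. Qed.

End Lagrange.

Section Summability.
Variable K : fieldType.
Hypothesis charK0 : [pchar K] =i pred0.

Lemma rat_comb_lagrange_sum (L : op K) x F : rat_comb F (size L) (lagrange_sum L x F).
Proof.
apply: (rat_comb_sum charK0 (T := fun i n =>
  \sum_(k < i) (L`_i * x).[n%:R - i%:R + k%:R] * F (n + k)%N)) => i lt_iL.
apply: (rat_comb_sum charK0 (T := fun k n =>
  (L`_i * x).[n%:R - i%:R + k%:R] * F (n + k)%N)) => k lt_ki.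
apply: rat_comb_scale => //; last by apply: rat_comb_shift; apply: ltn_trans lt_iL.
apply: eventually_rational_ext (eventually_rational_poly ((L`_i * x) \Po ('X + (k%:R - i%:R)%:P))).
by exists 0%N => n _; rewrite horner_comp hornerD hornerX hornerC addrA addrAC.
Qed.

Lemma summable_telescoping G m T :
  (exists M : op K, last 0 M != 0 /\ in_ann M G) -> rat_comb G m T ->
  (forall n, G n = T n.+1 - T n) -> summable G.
Proof.
move=> annG TG GE; have [r ordG] := ord_seq_exists annG.
exists r; split => //; have [[M [M_lead [size_M annMG]]] _] := ordG.
have [f [f_rat TE]] := rat_comb_reduce charK0 M_lead size_M annMG TG.
have nd_ex i : exists nd : {poly K} * {poly K},
    nd.2 != 0 /\ eventually (fun n => f i n = nd.1.[n%:R] / nd.2.[n%:R]).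
  by have [a [b ab]] := f_rat i; exists (a, b).
have [nd nd_spec] := IndefiniteDescription.functional_choice _ nd_ex.
exists (fun i => (nd i).1), (fun i => (nd i).2); split; first by move=> i; case: (nd_spec i).
have fE := eventually_forall_lt (fun i _ => (nd_spec i).2) (m := r).
have [N HN] := eventually_and TE fE; exists N => n Nn.
have TE' k : (N <= k)%N ->
    T k = \sum_(i < r) (nd i).1.[k%:R] / (nd i).2.[k%:R] * G (k + i)%N.
  by move=> /HN [-> fkE]; apply: eq_bigr => i _; rewrite fkE.
by rewrite GE !TE' // ltnW.
Qed.

End Summability.

Section Degree.
Variable K : fieldType.

Definition fdiff (x : {poly K}) (k : nat) : {poly K} :=
  iter k (fun q => q \Po ('X + 1%:P) - q) x.

Lemma fdiffS x k : fdiff x k.+1 = fdiff x k \Po ('X + 1%:P) - fdiff x k.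
Proof. by []. Qed.

Lemma size_fdiff1 (q : {poly K}) : (size (q \Po ('X + 1%:P) - q)%R <= (size q).-1)%N.
Proof.
have [->|q_neq0] := eqVneq q 0; first by rewrite comp_poly0 subr0 size_poly0.
have size_comp : size (q \Po ('X + 1%:P)) = size q by rewrite size_comp_poly2 ?size_XaddC.
apply/leq_sizeP => j le_j; rewrite coefB.
have [lt_jq | le_qj] := ltnP j (size q); last by rewrite !nth_default ?subrr ?size_comp.
have -> : j = (size q).-1 by move: le_j lt_jq; lia.
have := lead_coef_comp q (q := 'X + 1%:P).
rewrite size_XaddC lead_coefXaddC expr1n mulr1 => /(_ isT).
by rewrite /lead_coef size_comp => ->; rewrite subrr.
Qed.

Lemma size_fdiff x k : (size (fdiff x k) <= size x - k)%N.
Proof.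
elim: k => [|k IH]; first by rewrite subn0.
by rewrite fdiffS (leq_trans (size_fdiff1 _)) // subnS -!subn1 leq_sub2r.
Qed.

Lemma comp_poly_XaddnE x j :
  x \Po ('X + j%:R%:P) = \sum_(0 <= k < j.+1) 'C(j, k)%:R *: fdiff x k.
Proof.
elim: j => [|j IH]; first by rewrite big_nat1 polyC0 addr0 comp_polyXr bin0 scale1r.
have -> : 'X + j.+1%:R%:P = ('X + j%:R%:P) \Po ('X + 1%:P) :> {poly K}.
  by rewrite comp_polyD comp_polyX comp_polyC mulrSr polyCD addrAC addrA.
rewrite comp_polyA IH linear_sum /=.
under eq_bigr => k _ do
  rewrite linearZ /= -[_ \Po _](subrK (fdiff x k)) -fdiffS addrC scalerDr.
rewrite big_split /= [in RHS]big_nat_recl // bin0 scale1r.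
under [in RHS]eq_bigr => k _ do rewrite binS natrD scalerDl.
rewrite big_split /= addrA; congr (_ + _).
rewrite big_nat_recl // bin0 scale1r; congr (_ + _).
by rewrite big_nat_recr //= bin_small // scale0r addr0.
Qed.

Lemma comp_poly_XaddnE_wide x j M : (j < M)%N ->
  x \Po ('X + j%:R%:P) = \sum_(0 <= k < M) 'C(j, k)%:R *: fdiff x k.
Proof.
move=> lt_jM; rewrite comp_poly_XaddnE (big_cat_nat (leq0n j.+1) lt_jM) /=.
rewrite [X in _ = _ + X]big_nat_cond [X in _ = _ + X]big1 ?addr0 //.
move=> k /andP[/andP[lt_jk _] _].
by rewrite bin_small // scale0r.
Qed.

Lemma adjoint_bcoefE (L : op K) x : (0 < size L)%N ->
  adjoint L x =
  \sum_(0 <= k < size L) bcoef L k * (fdiff x k \Po ('X - ((size L).-1)%:R%:P)).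
Proof.
move=> size_L_gt0; have [J size_L] : exists J, size L = J.+1.
  by exists (size L).-1; rewrite prednK.
rewrite /adjoint /bcoef size_L /=.
pose A j := L`_(J - j) \Po ('X + (j%:R - J%:R)%:P).
pose e k := fdiff x k \Po ('X - J%:R%:P).
have term j : (0 <= j < J.+1)%N -> (L`_(J - j) * x) \Po ('X - (J - j)%:R%:P) =
    \sum_(0 <= k < J.+1) 'C(j, k)%:R *: (A j * e k).
  move=> lt_jJ; have le_jJ : (j <= J)%N by [].
  have shift_j : 'X - (J - j)%:R%:P = 'X + (j%:R - J%:R)%:P :> {poly K}.
    by rewrite natrB // -[j%:R - J%:R]opprB polyCN.
  have x_shift : x \Po ('X + (j%:R - J%:R)%:P) = x \Po ('X + j%:R%:P) \Po ('X - J%:R%:P).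
    rewrite -comp_polyA comp_polyD comp_polyX comp_polyC polyCB.
    by rewrite addrA [_ - _ + _]addrAC.
  rewrite shift_j comp_polyM x_shift (comp_poly_XaddnE_wide x lt_jJ).
  rewrite linear_sum mulr_sumr; apply: eq_bigr => k _.
  by rewrite linearZ /= scalerAr.
rewrite -(big_mkord xpredT (fun i => (L`_i * x) \Po ('X - i%:R%:P))) big_nat_rev /=.
under eq_big_nat => j j_range do rewrite add0n subSS (term j j_range).
rewrite exchange_big /=; apply: eq_big_nat => k /andP[_ lt_kJ].
rewrite mulr_suml (big_cat_nat (leq0n k) (ltnW lt_kJ)) /=.
rewrite [X in X + _]big_nat_cond [X in X + _]big1 ?add0r.
  by apply: eq_bigr => j _; rewrite -scalerAl.
by move=> j /andP[/andP[_ lt_jk] _]; rewrite bin_small // scale0r.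
Qed.

Lemma degL_ge_bcoef (L : op K) k : (k < (size L).-1.+1)%N -> bcoef L k != 0 ->
  (size (bcoef L k))%:Z - 1 - k%:Z <= degL L.
Proof. by move=> lt_kJ bk_neq0; rewrite /degL (bigD1 (Ordinal lt_kJ)) //= le_max lexx. Qed.

Lemma size_adjoint_Xn_le (L : op K) C : (0 < size L)%N -> adjoint L 'X^C != 0 ->
  (size (adjoint L 'X^C))%:Z - 1 <= degL L + C%:Z.
Proof.
(* The k-th term b_k(n) (Delta^k n^C)(n-J) has degree at most deg b_k + C - k. *)
move=> size_L_gt0 adj_neq0.
pose small (q : {poly K}) := q == 0 \/ (size q)%:Z - 1 <= degL L + C%:Z.
suff : small (adjoint L 'X^C) by case=> // /eqP adj0; rewrite adj0 eqxx in adj_neq0.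
rewrite adjoint_bcoefE // big_nat_cond; apply: (big_ind small); first by left.
  move=> a b [/eqP-> | small_a]; first by rewrite add0r.
  case=> [/eqP-> | small_b]; first by rewrite addr0; right.
  right; have := size_polyD a b.
  by move: small_a small_b; move: (size a) (size b) (size (a + b)) (degL L); lia.
move=> k /andP[/andP[_ lt_kL] _].
have [-> | bk_neq0] := eqVneq (bcoef L k) 0; first by left; rewrite mul0r.
set e := _ \Po _; have [-> | e_neq0] := eqVneq e 0; first by left; rewrite mulr0.
right; have size_e : (size e <= C.+1 - k)%N.
  by rewrite size_comp_poly2 ?size_XsubC // -(size_polyXn K C) size_fdiff.
have e_gt0 : (0 < size e)%N by rewrite size_poly_gt0.
have lt_kJ : (k < (size L).-1.+1)%N by rewrite prednK.
move: (degL_ge_bcoef lt_kJ bk_neq0) (size_polyMleq (bcoef L k) e) size_e e_gt0.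
by move: (size e) (size (bcoef L k)) (size (bcoef L k * e)) (degL L); lia.
Qed.

End Degree.

Unset Implicit Arguments.

Theorem theorem2p1 (K : fieldType) (charK0 : [pchar K] =i pred0)
  (F : nat -> K) (holF : holonomic F)
  (L : op K) (L_lead : last 0 L != 0) (L_ann : in_ann L F)
  (C : nat) (HC : czi L C) :
  exists p : {poly K}, p != 0 /\
    summable (fun n : nat => p.[n%:R] * F n) /\
    (size p)%:Z - 1 <= degL L + C%:Z.
Proof.
have [p_neq0 _] := HC.
exists (adjoint L 'X^C); split => //; split; last first.
  by apply: size_adjoint_Xn_le; rewrite ?last_neq0_size_gt0.
apply: (summable_telescoping charK0 (T := fun n => - lagrange_sum L 'X^C F n)).
- exact: in_ann_mul_poly p_neq0 L_lead L_ann.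
- by apply: rat_comb_mul_poly => //; apply: rat_comb_opp => //; apply: rat_comb_lagrange_sum.
- by move=> n; apply: adjoint_ann_telescoping.
Qed.
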